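(* Let $(X,G)$ be a minimal topological dynamical system, where $G$ is amenable. If $(x_1,\dots,x_K)\in X^K$ is a weakly mean-sensitive tuple, then for any open neighborhoods $U_k$ of $x_k$, $k=1,\dots,K$, one has $\nu_{eq}\big(\bigcap_{k=1}^K\pi_{eq}(U_k)\big)>0$.
   Context: $G$ is an infinite countable discrete group; a tds $(X,G)$ is a compact metric space $(X,d)$ with a $G$-action by homeomorphisms; minimal means no proper nonempty closed invariant subset. $\pi_{eq}:X\to X_{eq}$ is the factor map onto the maximal equicontinuous factor, $\nu_{eq}$ the unique invariant probability measure of $(X_{eq},G)$. For $F\subset G$, $\overline{BD}(F)=\max_{\{F_n\}}\limsup_n|F_n\cap F|/|F_n|$ over all Følner sequences of $G$. $(x_1,\dots,x_K)$ is a weakly mean-sensitive tuple if for all open neighborhoods $U_k\ni x_k$ there is $\delta>0$ such that for every nonempty open $U\subset X$, $\overline{BD}(\{g\in G: gU\cap U_k\neq\emptyset \text{ for } 1\le k\le K\})>\delta$. *)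

From HB Require Import structures.
From mathcomp Require Import all_boot all_order all_algebra.
From mathcomp Require Import monoid.
From mathcomp Require Import finmap.
From mathcomp Require Import all_classical all_reals all_analysis.
Set Implicit Arguments. Unset Strict Implicit. Unset Printing Implicit Defensive.
Import Order.TTheory GRing.Theory Num.Theory.
Import numFieldTopology.Exports numFieldNormedType.Exports.

Local Open Scope classical_set_scope.
Local Open Scope ring_scope.

(* Borel sigma-algebra on a topological space.  The library construction
   g_sigma_algebraType needs a pointed type, so we attach an (irrelevant)
   point t to the carrier.                                             *)
Definition pointed_at (T : choiceType) (t : T) : Type := T.
HB.instance Definition _ (T : choiceType) (t : T) := Choice.on (pointed_at t).
HB.instance Definition _ (T : choiceType) (t : T) :=
  isPointed.Build (pointed_at t) t.

Definition borel_at (T : topologicalType) (t : T) :=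
  g_sigma_algebraType (@open T : set (set (pointed_at t))).

Section Dyn.
Variable G : groupType.

Definition is_action (X : topologicalType) (act : G -> X -> X) : Prop :=
  [/\ (forall x, act 1%g x = x),
      (forall g h x, act (g * h)%g x = act g (act h x)) &
      (forall g, continuous (act g))].

Definition tds (R : realType) (X : metricType R) (act : G -> X -> X) : Prop :=
  compact [set: X] /\ is_action act.

Definition minimal (X : topologicalType) (act : G -> X -> X) : Prop :=
  forall A : set X, closed A -> A !=set0 ->
    (forall g, act g @` A `<=` A) -> A = [set: X].

Definition factor_map (X Y : topologicalType) (actX : G -> X -> X)
    (actY : G -> Y -> Y) (p : X -> Y) : Prop :=
  [/\ continuous p, (forall y, exists x, p x = y) &
      (forall g x, p (actX g x) = actY g (p x))].

Definition equicontinuous (R : realType) (Y : metricType R)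
    (act : G -> Y -> Y) : Prop :=
  forall e : R, 0 < e -> exists2 d : R, 0 < d &
    forall y y' : Y, mdist y y' < d -> forall g, mdist (act g y) (act g y') < e.

Definition max_equicontinuous_factor (R : realType) (X Y : metricType R)
    (actX : G -> X -> X) (actY : G -> Y -> Y) (p : X -> Y) : Prop :=
  [/\ tds actY, equicontinuous actY, factor_map actX actY p &
      forall (Z : metricType R) (actZ : G -> Z -> Z) (q : X -> Z),
        tds actZ -> equicontinuous actZ -> factor_map actX actZ q ->
        exists2 phi : Y -> Z, factor_map actY actZ phi & q = phi \o p].

Local Open Scope fset_scope.

Definition left_translate (g : G) (F : {fset G}) : {fset G} :=
  [fset (g * h)%g | h in F].

Definition symdiff (A B : {fset G}) : {fset G} := (A `\` B) `|` (B `\` A).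

Definition Folner (R : realType) (F : nat -> {fset G}) : Prop :=
  (forall n, F n != fset0) /\
  forall g : G,
    (fun n => (#|` symdiff (left_translate g (F n)) (F n)|%:R
               / #|` F n|%:R : R)) @ \oo --> (0 : R).

Definition density_in (R : realType) (F : {fset G}) (S : set G) : R :=
  #|` [fset g in F | `[< S g >]] |%:R / #|` F|%:R.

Definition upper_Banach_density (R : realType) (S : set G) : \bar R :=
  ereal_sup [set limn_esup (fun n => (density_in R (F n) S)%:E) |
             F in [set F | Folner R F]].

(* a countable discrete group is amenable iff it has a Følner sequence *)
Definition amenable (R : realType) : Prop := exists F, Folner R F.

Local Close Scope fset_scope.

Definition weakly_mean_sensitive (R : realType) (X : metricType R)
    (act : G -> X -> X) (K : nat) (x : 'I_K -> X) : Prop :=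
  forall U : 'I_K -> set X, (forall k, open (U k) /\ U k (x k)) ->
    exists2 delta : R, 0 < delta &
      forall V : set X, open V -> V !=set0 ->
        (delta%:E < upper_Banach_density R
           [set g | forall k, (act g @` V `&` U k) !=set0])%E.

End Dyn.

From Pilot Require Import Defs.
From HB Require Import structures.
From mathcomp Require Import all_boot all_order all_algebra.
From mathcomp Require Import monoid finmap.
From mathcomp Require Import all_classical all_reals all_analysis.
From mathcomp Require Import measurable_realfun ring.
Import Order.TTheory GRing.Theory Num.Theory.
Import numFieldTopology.Exports numFieldNormedType.Exports.
Set Implicit Arguments. Unset Strict Implicit. Unset Printing Implicit Defensive.
Local Open Scope classical_set_scope.
Local Open Scope ring_scope.

(* Shrink each [U k] to a ball [W k] whose closure lies in [U k] and let [C k]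
   be the image of that closure in the maximal equicontinuous factor; [C k] is
   closed.  Weak mean sensitivity yields delta > 0 such that for every nonempty
   open V the set of g for which gV meets every [W k] has upper Banach density
   > delta.  Fix e > 0.  Equicontinuity gives eta such that eta-close points
   stay e/2-close along orbits, and minimality of the factor gives a finite
   K in G whose translates bring any point eta-close to any other.  For
   V := pi^-1 (ball y0 eta), each such g moves y0 into the e/2-thickening of
   every [C k]; averaging over Folner sets that are almost invariant under
   K^-1 and using the invariance of nu bounds the density by the nu-measure of
   the intersection of the e-thickenings.  That measure is thus >= delta for
   all e > 0, so nu (\bigcap_k C k) >= delta, and \bigcap_k C k is contained
   in \bigcap_k pi (U k). *)

Lemma count_le_inj (T T' : eqType) (f : T -> T') (s : seq T) (t : seq T')
    (a : pred T) (b : pred T') :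
  uniq s -> injective f -> (forall x, x \in s -> a x -> (f x \in t) && b (f x)) ->
  (count a s <= count b t)%N.
Proof.
move=> us injf sab; rewrite -!size_filter -(size_map f).
apply: uniq_leq_size; first by rewrite (map_inj_uniq injf) filter_uniq.
move=> y /mapP[x]; rewrite mem_filter => /andP[ax xs] ->.
by rewrite mem_filter andbC sab.
Qed.

Lemma card_fset_filter (T : choiceType) (F : {fset T}) (P : pred T) :
  #|` [fset x in F | P x]%fset| = count P F.
Proof.
rewrite -size_filter; apply/esym/eqP; rewrite eqn_leq.
by rewrite !uniq_leq_size ?filter_uniq ?fset_uniq // => x; rewrite mem_filter !inE andbC.
Qed.

Lemma count_exchange (I J : Type) (s : seq I) (t : seq J) (P : I -> J -> bool) :
  (\sum_(i <- s) count (P i) t = \sum_(j <- t) count (P^~ j) s)%N.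
Proof.
have count_sum (T : Type) (a : pred T) (r : seq T) : count a r = (\sum_(x <- r) a x)%N.
  by rewrite -sum1_count big_mkcond /=; apply: eq_bigr => x _; case: (a x).
under eq_bigr do rewrite count_sum.
by rewrite exchange_big /=; apply: eq_bigr => j _; rewrite count_sum.
Qed.

Lemma sumr_const_seq (V : nmodType) (I : Type) (s : seq I) (x : V) :
  \sum_(i <- s) x = x *+ size s.
Proof. by rewrite big_const_seq count_predT iter_addr_0. Qed.

Section Folner.
Variables (R : realType) (G : groupType).
Local Open Scope fset_scope.

Lemma count_translate_le (F : {fset G}) (P : pred G) (h : G) :
  (count P F <= count (fun g => P (h^-1 * g)%g) F
                + #|` symdiff (left_translate h F) F|)%N.
Proof.
pose stays g := (h * g)%g \in F.
have split_stays : (count P F <= count (predI P stays) F + count (predC stays) F)%N.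
  rewrite -count_predUI; apply: leq_trans (leq_addr _ _); apply: sub_count => g Pg.
  by rewrite /= Pg /=; case: (stays g).
apply: (leq_trans split_stays); apply: leq_add.
  apply: (count_le_inj (fset_uniq F) (@mulgI G h)) => g _ /andP[Pg hgF].
  by move: hgF; rewrite /stays => ->; rewrite mulKg.
rewrite -count_predT; apply: (count_le_inj (fset_uniq F) (@mulgI G h)) => g gF hgF.
move: hgF; rewrite /= /stays /left_translate !inE => /negbTE -> /=.
by rewrite andbF orbF andbT; apply/imfsetP; exists g.
Qed.

Definition almost_invariant (L : seq G) (tau : R) (F : {fset G}) : Prop :=
  forall g, g \in L ->
    #|` symdiff (left_translate g F) F|%:R <= tau * #|` F|%:R.

Lemma Folner_almost_invariant (F : nat -> {fset G}) (L : seq G) (tau : R) :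
  Folner R F -> 0 < tau -> \forall n \near \oo, almost_invariant L tau (F n).
Proof.
move=> [F0 FF] tau0; elim: L => [|g L IH]; first by apply: nearW => n g.
have near_g : \forall n \near \oo,
    `|#|` symdiff (left_translate g (F n)) (F n)|%:R / #|` F n|%:R| < tau.
  by apply: cvgr0_norm_lt => //; exact: FF.
apply: filterS (filterI IH near_g) => n [IHn gn] h.
rewrite in_cons => /orP[/eqP ->|]; last exact: IHn.
have Fn0 : 0 < #|` F n|%:R :> R by rewrite ltr0n cardfs_gt0.
by move: gn; rewrite ger0_norm ?divr_ge0 // ltr_pdivrMr // => /ltW.
Qed.

End Folner.

Lemma limn_esup_le_near (R : realType) (u : (\bar R)^nat) (l : \bar R) :
  (\forall n \near \oo, (u n <= l)%E) -> (limn_esup u <= l)%E.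
Proof.
move=> [N _ ul]; rewrite limn_esup_lim; apply: lime_le; first exact: is_cvg_esups.
exists N => // m Nm; apply: ge_ereal_sup => _ [n /= mn <-].
by apply: ul; apply: leq_trans mn.
Qed.

Section Measure.
Local Open Scope ereal_scope.
Context d (T : measurableType d) (R : realType).

Lemma probability_sum_ge_count (mu : probability T R) (I : Type) (s : seq I)
    (B : I -> set T) (c : R) :
  (forall i, measurable (B i)) ->
  (forall z, c <= (count (fun i => `[< B i z >]) s)%:R)%R ->
  c%:E <= \sum_(i <- s) mu (B i).
Proof.
move=> mB cB; have [c0|c0] := leP c 0%R.
  by apply: (@le_trans _ _ 0); [rewrite lee_fin|exact: sume_ge0].
have mind i : measurable_fun setT (fun z => (\1_(B i) z : R)%:E).
  exact/measurable_EFinP/measurable_indic.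
have -> : c%:E = \int[mu]_z (cst c%:E) z.
  by rewrite integral_cst //= probability_setT mule1.
under eq_bigr => i _ do rewrite -[B i]setIT -integral_indic //.
rewrite -ge0_integral_sum //; apply: ge0_le_integral => //.
- by move=> z _; rewrite lee_fin ltW.
- exact: emeasurable_sum.
move=> z _ /=; rewrite sumEFin lee_fin (le_trans (cB z)) //.
rewrite -sum1_count natr_sum big_mkcond /=; apply: ler_sum => i _.
by rewrite indicE; case: asboolP => //= Bi; rewrite mem_set.
Qed.

Lemma nonincreasing_measure_bigcap_ge (mu : {finite_measure set T -> \bar R})
    (D : (set T)^nat) (a : \bar R) :
  (forall n, measurable (D n)) -> nonincreasing_seq D ->
  (forall n, a <= mu (D n)) -> a <= mu (\bigcap_n D n).
Proof.
move=> mD ninc aD.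
have mcap : measurable (\bigcap_n D n) by apply: bigcap_measurable => //; exists 0%N.
have D0 : mu (D 0%N) < +oo by rewrite -ge0_fin_numE ?fin_num_measure.
have cv := nonincreasing_cvg_mu D0 mD mcap ninc.
rewrite -(cvg_lim _ cv) //; apply: lime_ge; last exact: nearW.
by apply/cvg_ex; exists (mu (\bigcap_n D n)).
Qed.

End Measure.

Lemma compact_finite_subcover (T : topologicalType) (I : choiceType) (f : I -> set T) :
  compact [set: T] -> (forall i, open (f i)) -> (forall t, exists i, f i t) ->
  exists s : seq I, forall t, exists2 i, i \in s & f i t.
Proof.
move=> cT fo cov; have [[t _]|T0] := pselect (exists t : T, True); last first.
  by exists [::] => t; exfalso; apply: T0; exists t.
(* [compact_cover] is stated for pointed spaces: point [T] at [t]. *)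
pose pT := HB.pack_for ptopologicalType T (isPointed.Build T t).
have : compact [set: pT] by [].
rewrite compact_cover => /(_ I setT f (fun i _ => fo i)) [u _|D _ Dcov].
  by have [i fi] := cov u; exists i.
by exists D => u; have [i Di fiu] := Dcov u Logic.I; exists i.
Qed.

Lemma open_fin_bigcap (T : topologicalType) (I : finType) (f : I -> set T) :
  (forall i, open (f i)) -> open (\bigcap_(i in [set: I]) f i).
Proof.
move=> fo; rewrite openE => y fy.
have : \forall z \near y, forall i, f i z.
  by apply: filter_forall => i; move: (fo i); rewrite openE; apply; apply: fy.
by apply: filterS => z fz i _.
Qed.

Lemma compact_hausdorff_closed_image (X Y : topologicalType) (p : X -> Y) (A : set X) :
  compact [set: X] -> hausdorff_space Y -> continuous p -> closed A -> closed (p @` A).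
Proof.
move=> cX hY cp cA; apply: compact_closed hY _.
apply: continuous_compact; first exact: continuous_subspaceT.
exact: subclosed_compact cX _.
Qed.

Section Thickening.
Variables (R : realType) (Y : pseudoMetricType R).

Definition thickening (C : set Y) (e : R) : set Y := \bigcup_(c in C) ball c e.

Lemma le_thickening (C : set Y) (e1 e2 : R) :
  e1 <= e2 -> thickening C e1 `<=` thickening C e2.
Proof. by move=> e12 y [c Cc cy]; exists c => //; apply: le_ball cy. Qed.

Lemma thickening_ball (C : set Y) (e1 e2 : R) (y y' : Y) :
  ball y e2 y' -> thickening C e1 y -> thickening C (e1 + e2) y'.
Proof. by move=> yy' [c Cc cy]; exists c => //; apply: ball_triangle yy'. Qed.

Lemma bigcap_thickening_closed (C : set Y) :
  closed C -> \bigcap_n thickening C n.+1%:R^-1 `<=` C.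
Proof.
move=> Ccl y Cy; rewrite (closure_id C).1 // => B /nbhs_ballP[e /= e0 yeB].
have [n _ ne] := near_infty_natSinv_lt (PosNum e0).
have [c Cc cy] := Cy n Logic.I; exists c; split => //; apply: yeB.
exact: le_ball (ltW (ne n (leqnn n))) _ (ball_sym cy).
Qed.

Lemma open_bigcup_thickeningC (U : set Y) :
  open U -> U = \bigcup_n ~` thickening (~` U) n.+1%:R^-1.
Proof.
move=> oU; apply/seteqP; split => [y Uy|y [n _ ny]]; last first.
  by apply: contrapT => nUy; apply: ny; exists y => //; apply: ballxx.
have /nbhs_ballP[e /= e0 yeU] : nbhs y U by move: oU; rewrite openE; apply.
have [n _ ne] := near_infty_natSinv_lt (PosNum e0).
exists n => // -[c nUc cy]; apply: nUc; apply: yeU.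
exact: le_ball (ltW (ne n (leqnn n))) _ (ball_sym cy).
Qed.

Lemma closure_ball_subset (U : set Y) (x : Y) :
  open U -> U x -> exists2 r, 0 < r & closure (ball x r) `<=` U.
Proof.
move=> oU Ux; have /nbhs_ballP[e /= e0 xeU] : nbhs x U by move: oU; rewrite openE; apply.
exists (e / 2); first by rewrite divr_gt0.
move=> y /(_ _ (nbhsx_ballx y (e / 2) _)) [|z [xz yz]]; first by rewrite divr_gt0.
by apply: xeU; rewrite (splitr e); apply: ball_triangle xz (ball_sym yz).
Qed.

End Thickening.

Section Metric.
Variables (R : realType) (Y : metricType R).

Lemma metric_ball_open (c : Y) (r : R) : open (ball c r).
Proof.
rewrite openE => y; rewrite ballEmdist /= => cy.
have : nbhs y (ball y (r - mdist c y)) by apply: nbhsx_ballx; rewrite subr_gt0.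
apply: filterS => z; rewrite !ballEmdist /= => yz.
by apply: le_lt_trans (metric_triangle c y z) _; rewrite -ltrBrDl.
Qed.

Lemma thickening_open (C : set Y) (e : R) : open (thickening C e).
Proof. by apply: bigcup_open => c _; apply: metric_ball_open. Qed.

End Metric.

Section Borel.
Variables (T : topologicalType) (t : T).

Lemma borel_at_open (A : set T) : open A -> measurable (A : set (borel_at t)).
Proof. exact: sub_sigma_algebra. Qed.

Lemma borel_at_closed (A : set T) : closed A -> measurable (A : set (borel_at t)).
Proof.
move=> cA; rewrite -(setCK A); apply: measurableC.
by apply: borel_at_open; apply: closed_openC.
Qed.

End Borel.

Lemma borel_at_image_open (R : realType) (X : metricType R) (Y : topologicalType)
    (y0 : Y) (p : X -> Y) (U : set X) :
  compact [set: X] -> hausdorff_space Y -> continuous p -> open U ->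
  measurable (p @` U : set (borel_at y0)).
Proof.
move=> cX hY cp /open_bigcup_thickeningC ->; rewrite image_bigcup.
apply: bigcup_measurable => n _; apply: borel_at_closed.
by apply: compact_hausdorff_closed_image => //; rewrite closedC; apply: thickening_open.
Qed.

Lemma measure_fin_bigcap_closed_ge (R : realType) (Y : metricType R) (y0 : Y)
    (nu : {finite_measure set (borel_at y0) -> \bar R}) (I : finType)
    (C : I -> set Y) (a : \bar R) :
  (forall i, closed (C i)) ->
  (forall e, 0 < e -> (a <= nu (\bigcap_(i in [set: I]) thickening (C i) e))%E) ->
  (a <= nu (\bigcap_(i in [set: I]) C i))%E.
Proof.
move=> Ccl aC; pose D n := \bigcap_(i in [set: I]) thickening (C i) n.+1%:R^-1.
have mD n : measurable (D n : set (borel_at y0)).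
  by apply: borel_at_open; apply: open_fin_bigcap => i; apply: thickening_open.
have ninc : nonincreasing_seq D.
  move=> m n mn; apply/subsetPset => y Dy i _; apply: le_thickening (Dy i Logic.I).
  by rewrite lef_pV2 ?posrE ?ler_nat.
have sub : \bigcap_n D n `<=` \bigcap_(i in [set: I]) C i.
  move=> y Dy i _; apply: (bigcap_thickening_closed (Ccl i)) => n _.
  exact: Dy n Logic.I i Logic.I.
have mcap : measurable (\bigcap_n D n : set (borel_at y0)).
  by apply: bigcap_measurable => //; exists 0%N.
have mC : measurable (\bigcap_(i in [set: I]) C i : set (borel_at y0)).
  by apply: borel_at_closed; apply: closed_bigI.
have aD n : (a <= nu (D n))%E by apply: aC; rewrite invr_gt0.
apply: le_trans (nonincreasing_measure_bigcap_ge mD ninc aD) _.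
exact: le_measure (mem_set mcap) (mem_set mC) sub.
Qed.

Section Minimal.
Variable G : groupType.

Lemma factor_minimal (X Y : topologicalType) (actX : G -> X -> X)
    (actY : G -> Y -> Y) (p : X -> Y) :
  factor_map actX actY p -> minimal actX -> minimal actY.
Proof.
move=> [pc psurj pe] minX A cA [y Ay] Ainv.
have pAT : p @^-1` A = [set: X].
  apply: minX; first exact: (continuous_closedP _).1 pc _ cA.
    by have [x pxy] := psurj y; exists x; rewrite /preimage /= pxy.
  by move=> g _ [x Apx <-]; rewrite /preimage /= pe; apply: Ainv; exists (p x).
apply/seteqP; split => // z _; have [x <-] := psurj z.
by rewrite -[A (p x)]/((p @^-1` A) x) pAT.
Qed.

Variables (R : realType) (Y : metricType R) (actY : G -> Y -> Y).
Hypotheses (actYa : is_action actY) (minY : minimal actY).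

Lemma minimal_orbit_ball (c z : Y) (r : R) : 0 < r -> exists g, ball c r (actY g z).
Proof.
have [act1 actM actc] := actYa; move=> r0; apply: contrapT => /forallNP zfar.
pose far := \bigcap_(g in [set: G]) actY g @^-1` ~` ball c r.
have farT : far = [set: Y].
  apply: minY => [||g _ [z' farz' <-] h _].
  - apply: closed_bigI => g _; apply: (continuous_closedP _).1 (actc g) _ _.
    by apply: open_closedC; apply: metric_ball_open.
  - by exists z => g _; apply: zfar.
  - by rewrite /preimage /= -actM; apply: farz'.
have : far c by rewrite farT.
by move=> /(_ 1%g Logic.I); rewrite /preimage /= act1; apply; apply: ballxx.
Qed.

Lemma minimal_uniform_orbit (eta : R) : compact [set: Y] -> 0 < eta ->
  exists K : seq G, forall z z', exists2 k, k \in K & ball z eta (actY k z').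
Proof.
have [_ _ actc] := actYa; move=> cY eta0; have eta20 : 0 < eta / 2 by rewrite divr_gt0.
have center_cover (z : Y) : exists c, ball c (eta / 2) z by exists z; apply: ballxx.
have [cs cs_cover] := compact_finite_subcover (f := fun c : Y => ball c (eta / 2)) cY
  (fun c => metric_ball_open c _) center_cover.
have orbit_cover c : exists Kc : seq G,
    forall z', exists2 k, k \in Kc & ball c (eta / 2) (actY k z').
  apply: (compact_finite_subcover (f := fun k => actY k @^-1` ball c (eta / 2)) cY).
    by move=> k; apply: (continuousP _).1 (actc k) _ (metric_ball_open _ _).
  by move=> z'; apply: minimal_orbit_ball.
have [Kc Kc_cover] := choice orbit_cover.
exists (flatten (map Kc cs)) => z z'.
have [c cs_c cz] := cs_cover z; have [k Kc_k ckz'] := Kc_cover c z'.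
exists k; first by apply/flattenP; exists (Kc c) => //; apply: map_f.
by rewrite (splitr eta); apply: ball_triangle (ball_sym cz) ckz'.
Qed.

End Minimal.

Section Averaging.
Variables (R : realType) (G : groupType) (Y : metricType R) (actY : G -> Y -> Y).
Variables (y0 : Y) (nu : probability (borel_at y0) R).
Hypothesis actYa : is_action actY.
Hypothesis nu_invariant : forall g (A : set (borel_at y0)), measurable A ->
  nu (actY g @^-1` A) = nu A.
Variables (A B : set Y) (eta : R) (K : seq G).
Hypothesis oB : open B.
Hypothesis K_net : forall z z', exists2 k, k \in K & ball z eta (actY k z').
Hypothesis AB : forall g z z', ball z eta z' -> A (actY g z) -> B (actY g z').

Local Notation b := (fine (nu B)).

Lemma count_visits_le (E : {fset G}) (tau : R) (z : Y) :
  almost_invariant [seq k^-1%g | k <- K] tau E ->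
  (count (fun h => `[< A (actY h^-1%g z) >]) E)%:R <= #|` E|%:R * (b + tau).
Proof.
have [_ actM actc] := actYa; move=> Einv.
set c := (count _ E)%:R; set e := #|` E|%:R.
have mBh h : measurable (actY h^-1%g @^-1` B : set (borel_at y0)).
  by apply: borel_at_open; apply: (continuousP _).1 (actc _) _ oB.
(* Pointwise, #{h in E | h^-1 z' in B} >= c - tau e because z is eta-close to
   some k z' with k in K; integrating against nu gives |E| nu(B) by invariance. *)
have : ((c - tau * e)%:E <= \sum_(h <- E) nu (actY h^-1%g @^-1` B))%E.
  apply: probability_sum_ge_count => // z'; have [k kK zkz'] := K_net z z'.
  have toB : (count (fun h => `[< A (actY h^-1%g z) >]) E <=
              count (fun h => `[< B (actY h^-1%g (actY k z')) >]) E)%N.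
    by apply: sub_count => h /asboolP Ah; apply/asboolP; apply: AB Ah.
  have shift g : actY (k^-1^-1 * g)^-1 (actY k z') = actY g^-1 z'.
    by rewrite invgK invgM -actM mulgVK.
  have := count_translate_le E (fun h => `[< B (actY h^-1%g (actY k z')) >]) k^-1.
  under [X in (_ <= X + _)%N]eq_count => g do rewrite shift.
  move=> /(leq_trans toB); rewrite -(ler_nat R) natrD lerBlDr => /le_trans; apply.
  by rewrite lerD2l; apply: Einv; apply: map_f.
have mB : measurable (B : set (borel_at y0)) by apply: borel_at_open.
rewrite (eq_bigr (fun=> nu B)) => [|h _]; last exact: nu_invariant.
rewrite -(fineK (fin_num_measure _ _ mB)) sumEFin lee_fin sumr_const_seq.
by rewrite -mulr_natl mulrDr [tau * _]mulrC lerBlDr.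
Qed.

Lemma density_le (yb : Y) (S : set G) (E F : {fset G}) (tau : R) :
  E != fset0 -> F != fset0 ->
  almost_invariant [seq k^-1%g | k <- K] tau E -> almost_invariant E tau F ->
  (forall g, S g -> A (actY g yb)) -> density_in R F S <= b + tau *+ 2.
Proof.
have [_ actM _] := actYa; move=> E0 F0 Einv Finv SA.
set e := #|` E|; set f := #|` F|.
have e0 : 0 < e%:R :> R by rewrite ltr0n cardfs_gt0.
have f0 : 0 < f%:R :> R by rewrite ltr0n cardfs_gt0.
set cA := count (fun g => `[< A (actY g yb) >]) F.
have cS : (count (fun g => `[< S g >]) F <= cA)%N.
  by apply: sub_count => g /asboolP Sg; apply/asboolP; apply: SA.
have translate h : (cA <= count (fun g => `[< A (actY h^-1%g (actY g yb)) >]) F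
                         + #|` symdiff (left_translate h F) F|)%N.
  have := count_translate_le F (fun g => `[< A (actY g yb) >]) h.
  by under [X in (_ <= X + _)%N]eq_count => g do rewrite actM.
(* Double counting of the pairs (h, g) in E x F with h^-1 g yb in A. *)
have double_count : (cA * e)%:R <=
    \sum_(g <- F) (count (fun h => `[< A (actY h^-1%g (actY g yb)) >]) E)%:R
    + \sum_(h <- E) (#|` symdiff (left_translate h F) F|)%:R :> R.
  rewrite -!natr_sum -natrD ler_nat -count_exchange -big_split /=.
  rewrite -[e]/(size E) -count_predT -iter_addn_0 -big_const_seq.
  by apply: leq_sum => h _; apply: translate.
have visits : \sum_(g <- F) (count (fun h => `[< A (actY h^-1%g (actY g yb)) >]) E)%:R
    <= f%:R * (e%:R * (b + tau)).
  rewrite mulr_natl -sumr_const_seq; apply: ler_sum => g _.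
  exact: count_visits_le.
have boundary : \sum_(h <- E) (#|` symdiff (left_translate h F) F|)%:R
    <= e%:R * (tau * f%:R) :> R.
  rewrite mulr_natl -sumr_const_seq big_seq [leRHS]big_seq.
  by apply: ler_sum => h hE; apply: Finv.
rewrite /density_in card_fset_filter -/f ler_pdivrMr //.
apply: (@le_trans _ _ cA%:R); first by rewrite ler_nat.
rewrite -(ler_pM2r e0) -natrM.
apply: le_trans double_count _; apply: le_trans (lerD visits boundary) _.
by rewrite le_eqVlt; apply/orP; left; apply/eqP; rewrite mulr2n; ring.
Qed.

Lemma upper_Banach_density_le_measure (yb : Y) (S : set G) :
  (forall g, S g -> A (actY g yb)) -> (upper_Banach_density R S <= nu B)%E.
Proof.
move=> SA; apply: ge_ereal_sup => _ [F FF <-]; have [F0 _] := FF.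
have mB : measurable (B : set (borel_at y0)) by apply: borel_at_open.
rewrite -(fineK (fin_num_measure _ _ mB)); apply/lee_addgt0Pr => t t0.
have tau0 : 0 < t / 2 by rewrite divr_gt0.
have [N _ EN] := Folner_almost_invariant [seq k^-1%g | k <- K] FF tau0.
apply: limn_esup_le_near; apply: filterS (Folner_almost_invariant (F N) FF tau0).
move=> n Fn; rewrite -EFinD lee_fin [t in _ + t](splitr t) -mulr2n.
exact: density_le (EN N (leqnn N)) Fn SA.
Qed.

End Averaging.

Section EquicontinuousFactor.
Variables (R : realType) (G : groupType) (X Y : metricType R).
Variables (actX : G -> X -> X) (actY : G -> Y -> Y) (p : X -> Y).
Variables (y0 : Y) (nu : probability (borel_at y0) R).
Hypotheses (minX : minimal actX) (cY : compact [set: Y]) (actYa : is_action actY).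
Hypotheses (equiY : Defs.equicontinuous actY) (fp : factor_map actX actY p).
Hypothesis nu_invariant : forall g (A : set (borel_at y0)), measurable A ->
  nu (actY g @^-1` A) = nu A.

Lemma hitting_density_le_measure (I : finType) (W : I -> set X) (C : I -> set Y) (e : R) :
  0 < e -> (forall i, p @` W i `<=` C i) ->
  exists2 V : set X, open V /\ V !=set0 &
    (upper_Banach_density R [set g | forall i, (actX g @` V `&` W i) !=set0]
       <= nu (\bigcap_(i in [set: I]) thickening (C i) e))%E.
Proof.
have [pc psurj pe] := fp; move=> e0 WC; have e20 : 0 < e / 2 by rewrite divr_gt0.
have [eta eta0 equi] := equiY e20.
have equi_ball y y' g : ball y eta y' -> ball (actY g y) (e / 2) (actY g y').
  by rewrite !ballEmdist => /equi; apply.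
have [K K_net] := minimal_uniform_orbit actYa (factor_minimal fp minX) cY eta0.
exists (p @^-1` ball y0 eta).
  split; first exact: (continuousP _).1 pc _ (metric_ball_open _ _).
  by have [x0 px0] := psurj y0; exists x0; rewrite /preimage /= px0; apply: ballxx.
apply: (upper_Banach_density_le_measure actYa nu_invariant
  (A := \bigcap_(i in [set: I]) thickening (C i) (e / 2)) _ K_net _ (yb := y0)).
- by apply: open_fin_bigcap => i; apply: thickening_open.
- move=> g z z' zz' Agz i _; rewrite (splitr e).
  exact: thickening_ball (equi_ball _ _ g zz') (Agz i Logic.I).
- move=> g Sg i _; have [_ [[v y0v <-] Wgv]] := Sg i.
  exists (p (actX g v)); first by apply: WC; exists (actX g v).
  by rewrite pe; apply: equi_ball; apply: ball_sym.
Qed.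

End EquicontinuousFactor.

Theorem lemma5p4 (R : realType) (G : groupType)
    (X : metricType R) (actX : G -> X -> X)
    (Y : metricType R) (actY : G -> Y -> Y) (pi_eq : X -> Y) (y0 : Y)
    (nu_eq : probability (borel_at y0) R) (K : nat) (x : 'I_K -> X) :
  countable [set: G] -> infinite_set [set: G] -> amenable G R ->
  tds actX -> minimal actX ->
  max_equicontinuous_factor actX actY pi_eq ->
  (forall (g : G) (A : set (borel_at y0)), measurable A ->
     nu_eq (actY g @^-1` A) = nu_eq A) ->
  weakly_mean_sensitive actX x ->
  forall U : 'I_K -> set X, (forall k, open (U k) /\ U k (x k)) ->
  (0 < nu_eq (\bigcap_(k in [set: 'I_K]) (pi_eq @` U k)))%E.
Proof.
move=> _ _ _ [cX _] minX [[cY actYa] equiY fp _] nu_inv wms U HU.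
have [pc _ _] := fp.
have /choice[r /all_and2[r0 rU]] k :
    exists r, 0 < r /\ closure (ball (x k) r) `<=` U k.
  by have [r ? ?] := closure_ball_subset (HU k).1 (HU k).2; exists r.
have [delta delta0 wms_ball] := wms (fun k => ball (x k) (r k))
  (fun k => conj (metric_ball_open _ _) (ballxx _ (r0 k))).
pose C k := pi_eq @` closure (ball (x k) (r k)).
have Ccl k : closed (C k).
  exact: compact_hausdorff_closed_image cX (@metric_hausdorff _ Y) pc (@closed_closure _ _).
have lower e : 0 < e -> (delta%:E <= nu_eq (\bigcap_(k in [set: 'I_K]) thickening (C k) e))%E.
  move=> e0; have [V [oV V0] le] := hitting_density_le_measure minX cY actYa equiY fp
    nu_inv (W := fun k => ball (x k) (r k)) (C := C) e0
    (fun k => image_subset _ (@subset_closure _ _)).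
  exact/ltW/(lt_le_trans (wms_ball V oV V0) le).
have mU : measurable (\bigcap_(k in [set: 'I_K]) (pi_eq @` U k) : set (borel_at y0)).
  apply: fin_bigcap_measurable => [|k _]; first exact: finite_finset.
  exact: borel_at_image_open cX (@metric_hausdorff _ Y) pc (HU k).1.
have mC : measurable (\bigcap_(k in [set: 'I_K]) C k : set (borel_at y0)).
  by apply: borel_at_closed; apply: closed_bigI.
have CU : \bigcap_(k in [set: 'I_K]) C k `<=` \bigcap_(k in [set: 'I_K]) (pi_eq @` U k).
  by move=> y Cy k _; apply: image_subset (rU k) _ (Cy k Logic.I).
apply: lt_le_trans (le_trans (measure_fin_bigcap_closed_ge Ccl lower) _).
  by rewrite lte_fin.
exact: le_measure (mem_set mC) (mem_set mU) CU.
Qed.
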